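(* Let $\theta\in[0,1)$ and $\alpha_1,\dots,\alpha_T>0$, $\beta_1,\dots,\beta_T>0$ with $\sum_t\alpha_t=\sum_t\beta_t=1$, and let $\gamma_t=\beta_t/\alpha_t$. For $\eta_1\ge0$ define $$\Upsilon_{\mathrm{market}}(\eta_1)=1+\theta^2\Big(\sum_{t=1}^T\frac{\beta_t^2}{\alpha_t}-1\Big)+\eta_1\sum_{t=1}^T\frac{\alpha_t(1-\theta(1-\gamma_t))^2(1-\gamma_t)}{1+\eta_1\gamma_t}.$$ Then $\Upsilon_{\mathrm{market}}$ is decreasing on $[0,\frac{\theta}{1-\theta}]$ and increasing on $[\frac{\theta}{1-\theta},\infty)$, and $$\Upsilon_{\mathrm{market}}(0)=1+\theta^2\Big(\sum_t\frac{\beta_t^2}{\alpha_t}-1\Big),\quad \Upsilon_{\mathrm{market}}\Big(\frac{\theta}{1-\theta}\Big)=1,\quad \lim_{\eta_1\to\infty}\Upsilon_{\mathrm{market}}(\eta_1)=1+(1-\theta)^2\Big(\sum_{t=1}^T\frac{\alpha_t^2}{\beta_t}-1\Big).$$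
   Context: $\Upsilon_{\mathrm{market}}(\eta_1)$ is the ratio of the expected cost of the separable schedule $(\alpha_t(1-\theta)+\beta_t\theta)\mathbf{x}_0$ to the optimal expected cost when the liquidated portfolio $\mathbf{x}_0$ equals the index portfolio $\mathbf{w}_1$, with $\eta_1=\bar\psi_{\mathrm{f},1}\mathbf{w}_1^\top\bar{\boldsymbol{\Psi}}_{\mathrm{id}}^{-1}\mathbf{w}_1$ the ratio of index-fund to single-stock liquidity along $\mathbf{w}_1$. *)

From HB Require Import structures.
From mathcomp Require Import all_boot all_order all_algebra.
From mathcomp Require Import all_classical all_reals all_analysis.
Set Implicit Arguments. Unset Strict Implicit. Unset Printing Implicit Defensive.
Import Order.TTheory GRing.Theory Num.Theory.
Local Open Scope ring_scope.

Definition gam (R : realType) (T : nat) (alpha beta : 'I_T -> R) (t : 'I_T) : R :=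
  beta t / alpha t.

Definition Upsilon_market (R : realType) (T : nat) (theta : R)
  (alpha beta : 'I_T -> R) (eta1 : R) : R :=
  1 + theta ^+ 2 * (\sum_(t < T) beta t ^+ 2 / alpha t - 1)
  + eta1 * \sum_(t < T)
      (alpha t * (1 - theta * (1 - gam alpha beta t)) ^+ 2 * (1 - gam alpha beta t))
        / (1 + eta1 * gam alpha beta t).

From HB Require Import structures.
From mathcomp Require Import all_boot all_order all_algebra.
From mathcomp Require Import all_classical all_reals all_analysis.
From mathcomp Require Import ring.
Import Order.TTheory GRing.Theory Num.Theory.
Import numFieldNormedType.Exports.
Local Open Scope classical_set_scope.
Local Open Scope ring_scope.

(* With c = θ/(1-θ) and Σα = Σβ = 1, subtracting the vanishing sum
   (η/(1+η) - θ²) Σ_t (α_t - β_t) from the defining sum turns every summand into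
   a multiple of (α_t - β_t)², which gives the closed form
     Υ(η) = 1 + (1-θ)² Σ_t (α_t - β_t)² (η - c)² / ((1 + η) (α_t + η β_t)).
   Each weight (η - c)² / ((1 + η) (α + η β)) is the product of (η - c)/(1 + η)
   and (η - c)/(α + η β), two nondecreasing functions with the sign of η - c.
   Hence it decreases on [0, c], vanishes at c, increases on [c, ∞) and tends
   to 1/β; finally Σ (α - β)²/β = Σ α²/β - 1. *)

Definition Upsilon_weight {F : fieldType} (c a b eta : F) : F :=
  (eta - c) ^+ 2 / ((1 + eta) * (a + eta * b)).

Lemma Upsilon_weightE (F : fieldType) (c a b eta : F) :
  Upsilon_weight c a b eta = (eta - c) / (1 + eta * 1) * ((eta - c) / (a + eta * b)).
Proof. by rewrite /Upsilon_weight expr2 invfM mulrACA mulr1. Qed.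

Lemma ler_shift_ratio (R : realFieldType) (c p q x y : R) :
  0 <= p + c * q -> 0 < p + x * q -> 0 < p + y * q -> x <= y ->
  (x - c) / (p + x * q) <= (y - c) / (p + y * q).
Proof.
move=> c0 x0 y0 xy; rewrite ler_pdivrMr // mulrAC ler_pdivlMr // -subr_ge0.
have -> : (y - c) * (p + x * q) - (x - c) * (p + y * q) = (y - x) * (p + c * q) by ring.
by rewrite mulr_ge0 // subr_ge0.
Qed.

Section weight_monotone.
Variables (R : realFieldType) (c a b : R).
Hypotheses (a_gt0 : 0 < a) (b_ge0 : 0 <= b).

Let denom_gt0 (p q x : R) : 0 < p -> 0 <= q -> 0 <= x -> 0 < p + x * q.
Proof. by move=> p0 q0 x0; rewrite ltr_pwDl // mulr_ge0. Qed.

Let shift_ratio_le (p q x y : R) : 0 < p -> 0 <= q -> 0 <= c -> 0 <= x -> x <= y ->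
  (x - c) / (p + x * q) <= (y - c) / (p + y * q).
Proof.
move=> p0 q0 c0 x0 xy; apply: ler_shift_ratio => //; last exact: denom_gt0 (le_trans x0 xy).
  exact/ltW/denom_gt0.
exact: denom_gt0.
Qed.

Lemma Upsilon_weight_le_c x y : 0 <= x -> x <= y -> y <= c ->
  Upsilon_weight c a b y <= Upsilon_weight c a b x.
Proof.
move=> x0 xy yc; have c0 := le_trans (le_trans x0 xy) yc.
have ratio_le0 (p q z : R) : 0 < p -> 0 <= q -> 0 <= z -> z <= c -> (z - c) / (p + z * q) <= 0.
  by move=> p0 q0 z0 zc; rewrite mulr_le0_ge0 ?subr_le0 // invr_ge0 ltW ?denom_gt0.
rewrite !Upsilon_weightE -[X in X <= _]mulrNN -[X in _ <= X]mulrNN.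
by apply: ler_pM; rewrite ?oppr_ge0 ?lerN2 ?ratio_le0 ?shift_ratio_le ?(le_trans x0 xy).
Qed.

Lemma Upsilon_weight_ge_c x y : 0 <= c -> c <= x -> x <= y ->
  Upsilon_weight c a b x <= Upsilon_weight c a b y.
Proof.
move=> c0 cx xy; have x0 := le_trans c0 cx.
have ratio_ge0 (p q z : R) : 0 < p -> 0 <= q -> c <= z -> 0 <= (z - c) / (p + z * q).
  by move=> p0 q0 cz; rewrite divr_ge0 ?subr_ge0 // ltW // denom_gt0 // (le_trans c0).
by rewrite !Upsilon_weightE; apply: ler_pM; rewrite ?ratio_ge0 ?shift_ratio_le // (le_trans cx).
Qed.

End weight_monotone.

Lemma cvg_shift_ratio (R : realType) (c p q : R) : q != 0 ->
  (x - c) / (p + x * q) @[x --> +oo] --> q^-1.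
Proof.
move=> q0.
have inv0 : x^-1 @[x --> +oo] --> (0 : R).
  by apply/gtr0_cvgV0; [near=> x | exact: cvg_id].
have -> : q^-1 = (1 - c * 0) / (p * 0 + q) by rewrite !mulr0 subr0 add0r div1r.
apply: (@cvg_trans _ ((fun x => (1 - c * x^-1) / (p * x^-1 + q)) @ +oo)).
  apply: near_eq_cvg; near=> x.
  have xn0 : x != 0 by rewrite gt_eqF //; near: x; exact: nbhs_pinfty_gt.
  rewrite -[RHS]mulr1 -[X in _ = _ * X](divff (invr_neq0 xn0)) mulf_div.
  by congr (_ / _); field.
apply: cvgM.
  by apply: cvgB; [exact: cvg_cst | exact: cvgMl_tmp].
apply: cvgV; first by rewrite mulr0 add0r.
by apply: cvgD; [exact: cvgMl_tmp | exact: cvg_cst].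
Unshelve. all: by end_near.
Qed.

Lemma Upsilon_summand_decomp (F : fieldType) (th a b eta : F) :
  1 - th != 0 -> a != 0 -> 1 + eta != 0 -> a + eta * b != 0 ->
  th ^+ 2 * (b ^+ 2 / a - b)
    + eta * (a * (1 - th * (1 - b / a)) ^+ 2 * (1 - b / a) / (1 + eta * (b / a)))
  = (1 - th) ^+ 2 * ((a - b) ^+ 2 * Upsilon_weight (th / (1 - th)) a b eta)
    + (eta / (1 + eta) - th ^+ 2) * (a - b).
Proof.
move=> th1 a0 eta1 ab0.
have -> : 1 + eta * (b / a) = (a + eta * b) / a by field.
by rewrite /Upsilon_weight; field; rewrite th1 a0 eta1 ab0.
Qed.

Section market.
Variables (R : realType) (T : nat) (theta : R) (alpha beta : 'I_T -> R).
Hypotheses (theta_ge0 : 0 <= theta) (theta_lt1 : theta < 1).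
Hypotheses (alpha_gt0 : forall t, 0 < alpha t) (beta_gt0 : forall t, 0 < beta t).
Hypotheses (sum_alpha : \sum_(t < T) alpha t = 1) (sum_beta : \sum_(t < T) beta t = 1).

Local Notation U := (Upsilon_market theta alpha beta).
Local Notation c := (theta / (1 - theta)).

Lemma Upsilon_marketE eta : 0 <= eta ->
  U eta = 1 + (1 - theta) ^+ 2 *
    \sum_(t < T) (alpha t - beta t) ^+ 2 * Upsilon_weight c (alpha t) (beta t) eta.
Proof.
move=> eta0; rewrite /Upsilon_market /gam -addrA; congr (1 + _).
transitivity (\sum_(t < T) (theta ^+ 2 * (beta t ^+ 2 / alpha t - beta t)
  + eta * (alpha t * (1 - theta * (1 - beta t / alpha t)) ^+ 2 * (1 - beta t / alpha t)
           / (1 + eta * (beta t / alpha t))))).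
  by rewrite big_split /= -!mulr_sumr sumrB sum_beta.
have th1 : 1 - theta != 0 by rewrite subr_eq0 gt_eqF.
have alpha_neq0 t : alpha t != 0 := lt0r_neq0 (alpha_gt0 t).
rewrite (eq_bigr _ (fun t _ =>
  @Upsilon_summand_decomp _ theta (alpha t) (beta t) eta th1 (alpha_neq0 t) _ _)).
- by rewrite big_split /= -!mulr_sumr sumrB sum_alpha sum_beta subrr mulr0 addr0.
- by rewrite gt_eqF // ltr_pwDl.
- by move=> t; rewrite gt_eqF // ltr_wpDr // mulr_ge0 // ltW.
Qed.

Let c_ge0 : 0 <= c.
Proof. by rewrite divr_ge0 // subr_ge0 ltW. Qed.

Lemma Upsilon_market_at_c : U c = 1.
Proof.
rewrite Upsilon_marketE // big1 ?mulr0 ?addr0 // => t _.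
by rewrite /Upsilon_weight subrr expr0n /= !mul0r mulr0.
Qed.

Lemma Upsilon_market_le_c x y : 0 <= x -> x <= y -> y <= c -> U y <= U x.
Proof.
move=> x0 xy yc; rewrite !Upsilon_marketE ?(le_trans x0 xy) //.
rewrite lerD2l ler_wpM2l ?sqr_ge0 //; apply: ler_sum => t _.
by rewrite ler_wpM2l ?sqr_ge0 // Upsilon_weight_le_c // ltW.
Qed.

Lemma Upsilon_market_ge_c x y : c <= x -> x <= y -> U x <= U y.
Proof.
move=> cx xy; have x0 := le_trans c_ge0 cx.
rewrite !Upsilon_marketE ?(le_trans x0 xy) //.
rewrite lerD2l ler_wpM2l ?sqr_ge0 //; apply: ler_sum => t _.
by rewrite ler_wpM2l ?sqr_ge0 // Upsilon_weight_ge_c // ltW.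
Qed.

Lemma Upsilon_market_cvg :
  U x @[x --> +oo] --> 1 + (1 - theta) ^+ 2 * (\sum_(t < T) alpha t ^+ 2 / beta t - 1).
Proof.
have -> : \sum_(t < T) alpha t ^+ 2 / beta t - 1 = \sum_(t < T) (alpha t - beta t) ^+ 2 * (beta t)^-1.
  rewrite [RHS](eq_bigr (fun t => alpha t ^+ 2 / beta t - alpha t *+ 2 + beta t)); last first.
    by move=> t _; field; rewrite lt0r_neq0.
  rewrite big_split sumrB /= sumrMnl sum_alpha sum_beta; ring.
apply: (cvg_trans (near_eq_cvg _)).
  near=> x; apply/esym/Upsilon_marketE.
  by near: x; exact: nbhs_pinfty_ge.
apply: cvgD; first exact: cvg_cst.
apply: cvgMl_tmp; apply: cvg_big => [|t _]; first exact: add_continuous.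
apply: cvgMl_tmp; have -> : (beta t)^-1 = 1^-1 * (beta t)^-1 by rewrite invr1 mul1r.
under eq_cvg do rewrite Upsilon_weightE.
by apply: cvgM; apply: cvg_shift_ratio; rewrite lt0r_neq0.
Unshelve. all: by end_near.
Qed.

End market.

Theorem mainTheorem9 (R : realType) (T : nat) (theta : R) (alpha beta : 'I_T -> R)
  (htheta0 : 0 <= theta) (htheta1 : theta < 1)
  (halpha : forall t, 0 < alpha t) (hbeta : forall t, 0 < beta t)
  (hsa : \sum_(t < T) alpha t = 1) (hsb : \sum_(t < T) beta t = 1) :
  let U := Upsilon_market theta alpha beta in
  let c := theta / (1 - theta) in
  (forall x y : R, 0 <= x -> x <= y -> y <= c -> U y <= U x) /\
  (forall x y : R, c <= x -> x <= y -> U x <= U y) /\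
  U 0 = 1 + theta ^+ 2 * (\sum_(t < T) beta t ^+ 2 / alpha t - 1) /\
  U c = 1 /\
  U x @[x --> +oo] --> 1 + (1 - theta) ^+ 2 * (\sum_(t < T) alpha t ^+ 2 / beta t - 1).
Proof.
move=> U c; split; first by move=> x y; apply: Upsilon_market_le_c.
split; first by move=> x y; apply: Upsilon_market_ge_c.
split; first by rewrite /U /Upsilon_market mul0r addr0.
split; first by apply: Upsilon_market_at_c.
by apply: Upsilon_market_cvg.
Qed.
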